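(* Every graph $H\in\mathcal{H}'$ is 4-critical, i.e. $H$ is not properly 3-colorable but every proper subgraph of $H$ is.
   Context: A near-bipartite coloring of a graph is a partition of its vertices into $I,F$ with $I$ independent and $G[F]$ a forest; a graph is nb-critical if it has none but every proper subgraph has one. Base graphs: $K_4$; the wheel $W_5$ (a 5-cycle plus a vertex adjacent to all five cycle vertices); $J_7$, with vertices $w_1,\dots,w_4,v_1,v_2,v_3$ and edges $w_1v_1,w_1v_3,w_1w_4,w_2v_1,w_2v_2,w_2w_4,w_3v_2,w_3v_3,w_3w_4,v_1v_2,v_1v_3,v_2v_3$; and $J_{12}$, with vertices $a,b,p_1,\dots,p_4,q_1,\dots,q_6$ and edges $ab,p_1p_2,p_3p_4,ap_1,ap_2,bp_3,bp_4,q_1p_1,q_1p_2,q_2p_1,q_2p_2,q_3p_3,q_3p_4,q_4p_3,q_4p_4,q_5q_1,q_5q_3,q_6q_2,q_6q_4,q_5q_6$. The family $\mathcal{H}'$ of simple graphs is defined recursively: vertices $s,t$ of a graph $J$ are specially-linked in $J$ if there exist $H\in\mathcal{H}'$ and $vw\in E(H)$ such that $J$ contains a subgraph isomorphic to $H-vw$ with $v\mapsto s$, $w\mapsto t$. A graph $H$ lies in $\mathcal{H}'$ if it is a base graph, or if $H$ is nb-critical and has an induced cycle $C=x_1\cdots x_k$, $k\in\{3,5\}$, all $x_i$ of degree 3 in $H$, such that, writing $N(x_j)=\{x_{j-1},x_{j+1},z_j\}$ (indices mod $k$), whenever $z_j\ne z_{j+1}$ the vertices $z_j,z_{j+1}$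 are specially-linked in $H-V(C)$. *)

From mathcomp Require Import all_boot.
Set Implicit Arguments.
Unset Strict Implicit.
Unset Printing Implicit Defensive.

Record graph := Graph { vert : finType; adj : rel vert }.

Definition simple_rel (T : finType) (e : rel T) : Prop :=
  (forall x y, e x y = e y x) /\ (forall x, ~~ e x x).

Definition is_subgraph (T : finType) (e : rel T) (S : {set T}) (f : rel T) : Prop :=
  (forall x y, f x y = f y x) /\
  (forall x y, f x y -> [&& e x y, x \in S & y \in S]).

Definition proper_subgraph (T : finType) (e : rel T) (S : {set T}) (f : rel T) : Prop :=
  is_subgraph e S f /\ (S != setT \/ exists x y, e x y && ~~ f x y).

Definition induces_forest (T : finType) (f : rel T) (F : {set T}) : Prop :=
  ~ exists p : seq T, [/\ 3 <= size p, uniq p, all (fun v => v \in F) p & cycle f p].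

Definition independent (T : finType) (f : rel T) (I : {set T}) : Prop :=
  forall x y, x \in I -> y \in I -> ~~ f x y.

Definition nb_colorable (T : finType) (S : {set T}) (f : rel T) : Prop :=
  exists I F : {set T}, [/\ I :|: F = S, [disjoint I & F], independent f I & induces_forest f F].

Definition three_colorable (T : finType) (S : {set T}) (f : rel T) : Prop :=
  exists c : T -> 'I_3, forall x y, x \in S -> y \in S -> f x y -> c x != c y.

Definition nb_critical (T : finType) (e : rel T) : Prop :=
  ~ nb_colorable setT e /\
  forall S f, proper_subgraph e S f -> nb_colorable S f.

Definition four_critical (T : finType) (e : rel T) : Prop :=
  ~ three_colorable setT e /\
  forall S f, proper_subgraph e S f -> three_colorable S f.

Definition rel_of_edges (n : nat) (E : seq (nat * nat)) : rel 'I_n :=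
  fun x y => ((nat_of_ord x, nat_of_ord y) \in E) || ((nat_of_ord y, nat_of_ord x) \in E).

Definition K4 : graph := @Graph 'I_4 (fun x y => x != y).

Definition W5 : graph := @Graph 'I_6 (@rel_of_edges 6
  [:: (0,1); (1,2); (2,3); (3,4); (4,0); (0,5); (1,5); (2,5); (3,5); (4,5)]%N).

(* w1,w2,w3,w4 = 0,1,2,3 ; v1,v2,v3 = 4,5,6 *)
Definition J7 : graph := @Graph 'I_7 (@rel_of_edges 7
  [:: (0,4); (0,6); (0,3); (1,4); (1,5); (1,3); (2,5); (2,6); (2,3);
      (4,5); (4,6); (5,6)]%N).

(* a,b = 0,1 ; p1..p4 = 2..5 ; q1..q6 = 6..11 *)
Definition J12 : graph := @Graph 'I_12 (@rel_of_edges 12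
  [:: (0,1); (2,3); (4,5); (0,2); (0,3); (1,4); (1,5);
      (6,2); (6,3); (7,2); (7,3); (8,4); (8,5); (9,4); (9,5);
      (10,6); (10,8); (11,7); (11,9); (10,11)]%N).

Definition graph_iso (G H : graph) : Prop :=
  exists phi : vert G -> vert H, bijective phi /\
    forall x y, @adj H (phi x) (phi y) = @adj G x y.

Definition is_base (H : graph) : Prop :=
  graph_iso H K4 \/ graph_iso H W5 \/ graph_iso H J7 \/ graph_iso H J12.

(* s,t are specially linked in the graph J = (T,e) restricted to vertex set S
   (i.e. J = G[S]), relative to a class P of graphs: there are H in P and an
   edge vw of H such that H - vw embeds (as a subgraph) in J with v |-> s,
   w |-> t. *)
Definition specially_linked_gen (P : graph -> Prop)
    (T : finType) (e : rel T) (S : {set T}) (s t : T) : Prop :=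
  exists H : graph, P H /\ exists (v w : vert H), @adj H v w /\
    exists phi : vert H -> T,
      [/\ injective phi, (forall x, phi x \in S), phi v = s, phi w = t &
          forall x y, @adj H x y -> ~~ (((x == v) && (y == w)) || ((x == w) && (y == v))) ->
                      e (phi x) (phi y)].

Inductive inH' : graph -> Prop :=
| inH'_base (H : graph) :
    simple_rel (@adj H) -> is_base H -> inH' H
| inH'_rec (H : graph) (k : nat) (x : 'I_k -> vert H) :
    simple_rel (@adj H) ->
    nb_critical (@adj H) ->
    (k = 3 \/ k = 5) ->
    injective x ->
    (forall i, @adj H (x i) (x (ordS i))) ->
    (forall i j, @adj H (x i) (x j) -> j = ordS i \/ i = ordS j) ->
    (forall i, #|[set y | @adj H (x i) y]| = 3) ->
    (* z_j, z_{j+1} specially linked in H - V(C) whenever distinct *)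
    (forall j (zj zj1 : vert H),
        @adj H (x j) zj -> zj != x (ord_pred j) -> zj != x (ordS j) ->
        @adj H (x (ordS j)) zj1 -> zj1 != x j -> zj1 != x (ordS (ordS j)) ->
        zj != zj1 ->
        specially_linked_gen inH' (@adj H) (~: [set x i | i in 'I_k]) zj zj1) ->
    inH' H.

From mathcomp Require Import all_boot zify.

Set Implicit Arguments.
Unset Strict Implicit.
Unset Printing Implicit Defensive.

(* Base
   graphs are checked by exhaustive search.  In the recursive case, a proper
   3-coloring gives both ends of a specially-linked pair the same color, since
   otherwise it would properly color the linking graph, which is not
   3-colorable; so all outer neighbors z_j of the odd cycle C share one color
   and C would be properly 2-colored by the other two.  Proper subgraphs of base
   graphs are 3-colorable by the same search; those of nb-critical graphs are
   because a near-bipartite coloring yields a 3-coloring, forests being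
   bipartite. *)

Lemma three_colorable_setT (T : finType) (e : rel T) :
  three_colorable setT e <-> exists c : T -> 'I_3, forall x y, e x y -> c x != c y.
Proof.
by split=> -[c hc]; exists c => x y; [apply: hc; rewrite inE | move=> _ _; apply: hc].
Qed.

Lemma three_colorable_sub (T : finType) (S S' : {set T}) (e e' : rel T) :
  S' \subset S -> subrel e' e -> three_colorable S e -> three_colorable S' e'.
Proof.
move=> /subsetP sub_S sub_e [c hc].
by exists c => x y /sub_S xS /sub_S yS /sub_e; apply: hc.
Qed.

Lemma induces_forest_sub (T : finType) (f : rel T) (F F' : {set T}) :
  F' \subset F -> induces_forest f F -> induces_forest f F'.
Proof.
move=> /subsetP sFF' hF [p [size_p uniq_p /allP pF' cyc_p]]; apply: hF.
by exists p; split=> //; apply/allP => v /pF' /sFF'.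
Qed.

Section Forest.
Variables (T : finType) (f : rel T).
Hypotheses (f_sym : symmetric f) (f_irr : irreflexive f).

(* If every vertex of F has two neighbors in F, a path can always be extended
   by a new vertex: the only alternative closes a cycle of length at least 3. *)
Lemma forest_long_path (F : {set T}) : induces_forest f F -> F != set0 ->
  (forall v u, v \in F -> exists2 y, y \in F & f v y && (y != u)) ->
  forall n, exists u q, [/\ size q = n, uniq (u :: q), {subset u :: q <= F} & path f u q].
Proof.
move=> hF /set0Pn [v0 v0F] hdeg; elim=> [|n [u [q [size_q uniq_uq uqF path_uq]]]].
  by exists v0, [::]; split=> // y; rewrite inE => /eqP ->.
have [y yF /andP [fuy y_head]] := hdeg u (head u q) (uqF u (mem_head _ _)).
have yu : y != u by apply: contraTneq fuy => ->; rewrite f_irr.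
case yuq: (y \in u :: q); last first.
  exists y, (u :: q); split=> /=; first by rewrite size_q.
  - by rewrite -/(uniq (u :: q)) uniq_uq yuq.
  - by move=> w; rewrite inE => /predU1P [-> // | /uqF].
  by rewrite f_sym fuy.
exfalso; apply: hF.
move: yuq; rewrite in_cons (negbTE yu) /=.
case: q size_q uniq_uq uqF path_uq y_head => [//|a q] _ uniq_uq uqF path_uq /= ya.
rewrite in_cons (negbTE ya) /= => yq; move: uniq_uq uqF path_uq.
case/splitPr: yq => r1 r2.
rewrite -[a :: _]/((a :: r1) ++ _) -cat_rcons -cat_cons -rcons_cons.
rewrite cat_uniq cat_path => /andP [uniq_cyc _] uqF /andP [path_cyc _].
exists (rcons (u :: a :: r1) y); split=> //.
- by rewrite size_rcons.
- by apply/allP => w w_cyc; apply: uqF; rewrite mem_cat w_cyc.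
have /andP [fua path_ay] : f u a && path f a (rcons r1 y) := path_cyc.
by rewrite rcons_cons /= rcons_path fua path_ay last_rcons f_sym fuy.
Qed.

Lemma forest_leaf (F : {set T}) : induces_forest f F -> F != set0 ->
  exists2 v, v \in F & exists u, {in F, forall y, f v y -> y = u}.
Proof.
move=> hF F0.
case: (boolP [exists v in F, exists u, [forall y in F, f v y ==> (y == u)]]).
  case/exists_inP => v vF /existsP [u /forall_inP leaf]; exists v => //.
  by exists u => y yF /(implyP (leaf y yF)) /eqP.
move=> /exists_inPn no_leaf; exfalso.
have hdeg v u : v \in F -> exists2 y, y \in F & f v y && (y != u).
  move=> vF; have /existsPn /(_ u) /forall_inPn [y yF] := no_leaf v vF.
  by rewrite negb_imply => fvy; exists y.
have [u [q [size_q uniq_uq _ _]]] := forest_long_path hF F0 hdeg #|T|.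
by have := max_card (mem (u :: q)); rewrite (card_uniqP uniq_uq) /= size_q ltnn.
Qed.

Lemma forest_two_coloring (F : {set T}) : induces_forest f F ->
  exists c : T -> bool, {in F &, forall x y, f x y -> c x != c y}.
Proof.
elim: {F}_.+1 {-2}F (ltnSn #|F|) => // n IH F F_n hF.
have [-> | F0] := eqVneq F set0; first by exists xpred0 => x y; rewrite inE.
have [v vF [u leaf_v]] := forest_leaf hF F0.
have Fv_n : #|F :\ v| < n by move: F_n; rewrite (cardsD1 v) vF.
have [c hc] := IH _ Fv_n (induces_forest_sub (subsetDl F [set v]) hF).
exists (fun x => if x == v then ~~ c u else c x) => x y xF yF fxy.
have xy : x != y by apply: contraTneq fxy => ->; rewrite f_irr.
case: (eqVneq x v) => [xv | xv]; case: (eqVneq y v) => [yv | yv].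
- by move: xy; rewrite xv yv eqxx.
- by move: fxy; rewrite xv => /(leaf_v y yF) ->; case: (c u).
- by move: fxy; rewrite yv f_sym => /(leaf_v x xF) ->; case: (c u).
by apply: hc; rewrite // !inE ?xv ?yv.
Qed.

Lemma nb_colorable_three_colorable (S : {set T}) :
  nb_colorable S f -> three_colorable S f.
Proof.
move=> [I [F [IF_S _ indep_I forest_F]]].
have [b hb] := forest_two_coloring forest_F.
pose col x : nat := if x \in I then 2 else b x.
have col_lt3 x : col x < 3 by rewrite /col; case: (x \in I); case: (b x).
exists (fun x => inord (col x)) => x y xS yS fxy.
suff : col x != col y by apply: contra => /eqP /(congr1 val); rewrite /= !inordK // => ->.
have IF z : z \in S -> (z \in I) || (z \in F) by rewrite -IF_S inE.
rewrite /col; case xI: (x \in I); case yI: (y \in I).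
- by rewrite (negbTE (indep_I x y xI yI)) in fxy.
- by case: (b y).
- by case: (b x).
have /= xF := IF x xS; have /= yF := IF y yS; rewrite xI in xF; rewrite yI in yF.
by have := hb x y xF yF fxy; case: (b x); case: (b y).
Qed.

End Forest.

Lemma nb_critical_proper_three_colorable (T : finType) (e : rel T) S f :
  irreflexive e -> nb_critical e -> proper_subgraph e S f -> three_colorable S f.
Proof.
move=> e_irr [_ nb_proper] hSf; have [[f_sym f_e] _] := hSf.
apply: nb_colorable_three_colorable (nb_proper S f hSf) => // x.
by apply/negbTE/negP => /f_e /and3P [exx _ _]; rewrite e_irr in exx.
Qed.

Section OrdSCycle.
Variables (X : Type) (k : nat).

Lemma ordS_iterE (b : 'I_k.+1 -> X) (F : X -> X) :
  (forall i, b (ordS i) = F (b i)) -> forall i : 'I_k.+1, b i = iter i F (b ord0).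
Proof.
move=> bS [n n_lt]; elim: n n_lt => [|n IH] n_lt; first by congr b; apply: val_inj.
transitivity (b (ordS (Ordinal (ltnW n_lt)))); last by rewrite bS IH.
by congr b; apply: val_inj; rewrite /= modn_small.
Qed.

Lemma ordS_iter_period (b : 'I_k.+1 -> X) (F : X -> X) :
  (forall i, b (ordS i) = F (b i)) -> iter k.+1 F (b ord0) = b ord0.
Proof.
move=> bS; have /= b_max := ordS_iterE bS ord_max.
by rewrite -b_max -bS; congr b; apply: val_inj; apply: modnn.
Qed.

End OrdSCycle.

Lemma ordS_invariant_eq (X : Type) k (h : 'I_k -> X) :
  (forall i, h (ordS i) = h i) -> forall i j, h i = h j.
Proof.
case: k h => [h _ [] //|k h hS i j].
have h_const l : h l = h ord0.
  by rewrite (@ordS_iterE _ _ h id hS); elim: (nat_of_ord l) => //= n ->.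
by rewrite !h_const.
Qed.

Lemma two_colors_alternate (a x y z : 'I_3) :
  x != a -> y != a -> z != a -> x != y -> (y == z) = (x != z).
Proof.
by case: a x y z => [[|[|[|a]]] ?] // [[|[|[|x]]] ?] // [[|[|[|y]]] ?] // [[|[|[|z]]] ?].
Qed.

(* With two colors left, [g i == g ord0] flips at every step along the cycle,
   hence an odd number of times on the way back to [ord0]. *)
Lemma odd_cycle_avoiding_color k (g : 'I_k -> 'I_3) (a : 'I_3) :
  odd k -> (forall i, g i != a) -> ~ (forall i, g i != g (ordS i)).
Proof.
case: k g => [//|k] g odd_k g_a g_proper.
pose b i := g i == g ord0.
have bS i : b (ordS i) = ~~ b i.
  by rewrite /b (two_colors_alternate (g_a _) (g_a _) (g_a _) (g_proper i)).
have := ordS_iter_period bS; rewrite /b eqxx.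
suff -> : forall n, iter n negb true = ~~ odd n by rewrite odd_k.
by elim=> //= n ->; rewrite negbK.
Qed.

Lemma third_element (T : finType) (A : {set T}) (a b : T) :
  2 < #|A| -> exists y, [&& y \in A, y != a & y != b].
Proof.
move=> A_gt2; have : 0 < #|A :\ a :\ b|.
  move: A_gt2; rewrite (cardsD1 a A) (cardsD1 b (A :\ a)).
  by case: (a \in A); case: (b \in A :\ a); lia.
by case/card_gt0P => y; rewrite !inE => /and3P [yb ya yA]; exists y; rewrite yA ya yb.
Qed.

Definition not_three_colorable (G : graph) : Prop := ~ three_colorable setT (@adj G).

Lemma specially_linked_same_color (T : finType) (e : rel T) (S : {set T}) s t
    (c : T -> 'I_3) :
  (forall x y, e x y -> c x != c y) ->
  specially_linked_gen not_three_colorable e S s t -> c s = c t.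
Proof.
move=> c_proper [G [G_not3 [v [w [_ [phi [_ _ phi_v phi_w phi_edge]]]]]]].
apply/eqP; apply: contraT => cst; case: G_not3; apply/three_colorable_setT.
exists (fun x => c (phi x)) => x y xy.
have [/orP [] /andP [/eqP -> /eqP ->] | not_vw] :=
  boolP ((x == v) && (y == w) || (x == w) && (y == v)).
- by rewrite phi_v phi_w.
- by rewrite phi_v phi_w eq_sym.
by apply: c_proper; apply: phi_edge.
Qed.

Lemma linked_odd_cycle_not_three_colorable (T : finType) (e : rel T) (S : {set T})
    k (x : 'I_k -> T) :
  odd k -> (forall i, e (x i) (x (ordS i))) -> (forall i, 2 < #|[set y | e (x i) y]|) ->
  (forall j zj zj1,
      e (x j) zj -> zj != x (ord_pred j) -> zj != x (ordS j) ->
      e (x (ordS j)) zj1 -> zj1 != x j -> zj1 != x (ordS (ordS j)) ->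
      zj != zj1 -> specially_linked_gen not_three_colorable e S zj zj1) ->
  ~ three_colorable setT e.
Proof.
move=> odd_k x_cycle x_deg linked /three_colorable_setT [c c_proper].
have z_ex j : exists z, [&& e (x j) z, z != x (ord_pred j) & z != x (ordS j)].
  have [z] := third_element (x (ord_pred j)) (x (ordS j)) (x_deg j).
  by rewrite inE; exists z.
pose z j := xchoose (z_ex j).
have zP j : [&& e (x j) (z j), z j != x (ord_pred j) & z j != x (ordS j)].
  exact: (xchooseP (z_ex j)).
have cz_next j : c (z (ordS j)) = c (z j).
  have /and3P [xz1 z1_pred z1_next] := zP j.
  have /and3P [xz2 z2_pred z2_next] := zP (ordS j); rewrite ordSK in z2_pred.
  have [zz | z12] := eqVneq (z j) (z (ordS j)); first by rewrite zz.
  by symmetry; apply: (specially_linked_same_color c_proper); apply: (linked j).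
pose i0 : 'I_k := Ordinal (odd_gt0 odd_k).
apply: (odd_cycle_avoiding_color (g := fun i => c (x i)) (a := c (z i0)) odd_k) => i.
- by rewrite -(ordS_invariant_eq cz_next i); apply: c_proper; case/and3P: (zP i).
- exact: c_proper.
Qed.

Definition del_edge (T : eqType) (e : rel T) (u v : T) : rel T :=
  fun x y => e x y && ~~ ((x == u) && (y == v) || (x == v) && (y == u)).

(* Without isolated vertices, deleting a vertex deletes an edge at it, so this
   implies [four_critical]. *)
Definition edge_critical (T : finType) (e : rel T) : Prop :=
  [/\ ~ three_colorable setT e,
      forall u v, e u v -> three_colorable setT (del_edge e u v)
    & forall x, exists y, e x y].

Lemma edge_critical_four_critical (T : finType) (e : rel T) :
  edge_critical e -> four_critical e.
Proof.
case=> not3 del3 no_iso; split=> // S f [[f_sym f_sub] []].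
  rewrite -properT => /properP [_ [v _ vS]].
  have [y vy] := no_iso v.
  apply: three_colorable_sub (subsetT S) _ (del3 v y vy) => x z fxz.
  have /and3P [exz xS zS] := f_sub x z fxz.
  have [xv zv] : x != v /\ z != v by split; apply: contraNneq vS => <-.
  by rewrite /del_edge exz (negbTE xv) (negbTE zv) andbF.
move=> [a [b /andP [ab fab]]].
apply: three_colorable_sub (subsetT S) _ (del3 a b ab) => x y fxy.
have /and3P [exy _ _] := f_sub x y fxy; rewrite /del_edge exy /=.
apply/negP => /orP [] /andP [/eqP ex /eqP ey]; move: fab; rewrite -ex -ey.
  by rewrite fxy.
by rewrite f_sym fxy.
Qed.

Lemma edge_critical_iso (G H : graph) :
  graph_iso G H -> edge_critical (@adj H) -> edge_critical (@adj G).
Proof.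
move=> [phi [[psi phiK psiK] phi_adj]] [not3 del3 no_iso]; split.
- move=> /three_colorable_setT [c c_proper]; apply: not3; apply/three_colorable_setT.
  by exists (c \o psi) => x y xy; apply: c_proper; rewrite -phi_adj !psiK.
- move=> u v uv; rewrite -phi_adj in uv; have [c c_proper] := del3 _ _ uv.
  apply/three_colorable_setT; exists (c \o phi) => x y /andP [xy not_uv].
  by apply: c_proper; rewrite ?inE // /del_edge phi_adj xy !(can_eq phiK).
- by move=> x; have [y xy] := no_iso (phi x); exists (psi y); rewrite -phi_adj psiK.
Qed.

Definition edges_rel (E : seq (nat * nat)) : rel nat :=
  fun i j => ((i, j) \in E) || ((j, i) \in E).

Lemma edges_rel_sym E : symmetric (edges_rel E).
Proof. by move=> i j; rewrite /edges_rel orbC. Qed.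

Section Colorings.
Variable E : seq (nat * nat).

(* A 3-coloring of the vertices [0, ..., n-1] is encoded as the sequence of
   their colors; [colorings n] lists the proper ones, built vertex by vertex. *)
Definition compatible (s : seq nat) (c : nat) : bool :=
  all (fun i => edges_rel E i (size s) ==> (nth 0 s i != c)) (iota 0 (size s)).

Fixpoint colorings (n : nat) : seq (seq nat) :=
  if n is n'.+1 then
    flatten [seq [seq rcons s c | c <- iota 0 3 & compatible s c] | s <- colorings n']
  else [:: [::]].

Lemma colorings_sound n s : s \in colorings n ->
  [/\ size s = n, all (fun c => c < 3) s &
      forall i j, i < j < n -> edges_rel E i j -> nth 0 s i != nth 0 s j].
Proof.
elim: n s => [|n IH] s.
  by rewrite inE => /eqP ->; split=> // i j /andP [_].
case/flatten_mapP => s' /IH [size_s' s'_lt3 s'_proper] /mapP [c].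
rewrite mem_filter mem_iota /= => /andP [/allP s'_c c_lt3] ->.
split; [by rewrite size_rcons size_s' | by rewrite all_rcons c_lt3 s'_lt3 |].
move=> i j /andP [ij]; rewrite ltnS leq_eqVlt => /orP [/eqP j_n | j_n] ij_edge.
  have := s'_c i; rewrite mem_iota size_s' -j_n add0n ij => /(_ isT) /implyP.
  by rewrite !nth_rcons size_s' -j_n ij ltnn eqxx => /(_ ij_edge).
by rewrite !nth_rcons size_s' j_n (ltn_trans ij j_n) s'_proper ?ij.
Qed.

Lemma colorings_complete n (g : nat -> nat) : (forall i, g i < 3) ->
  (forall i j, i < j < n -> edges_rel E i j -> g i != g j) -> mkseq g n \in colorings n.
Proof.
move=> g_lt3; elim: n => [|n IH] g_proper; first by rewrite inE.
apply/flatten_mapP; exists (mkseq g n).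
  by apply: IH => i j /andP [ij j_n]; apply: g_proper; rewrite ij ltnW.
rewrite mkseqS.
apply: map_f; rewrite mem_filter mem_iota add0n g_lt3 leq0n !andbT.
apply/allP => i; rewrite size_mkseq mem_iota add0n => /andP [_ i_n].
by apply/implyP => ij_edge; rewrite nth_mkseq // g_proper ?i_n ?ltnSn.
Qed.

End Colorings.

Lemma three_colorable_edgesP (n : nat) (E : seq (nat * nat)) :
  all (fun p => p.1 != p.2) E ->
  reflect (three_colorable setT (@rel_of_edges n E)) (colorings E n != [::]).
Proof.
move=> /allP loopless; apply: (iffP idP) => [| /three_colorable_setT [c c_proper]].
  case E_n: (colorings E n) => [//|s l] _.
  have /colorings_sound [size_s /allP s_lt3 s_proper] : s \in colorings E n.
    by rewrite E_n mem_head.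
  have nth_lt3 (x : 'I_n) : nth 0 s x < 3 by apply: s_lt3; rewrite mem_nth ?size_s.
  apply/three_colorable_setT; exists (fun x : 'I_n => inord (nth 0 s x)) => x y xy.
  suff : nth 0 s x != nth 0 s y.
    by apply: contra => /eqP /(congr1 val); rewrite /= !inordK // => ->.
  have : x != y :> nat.
    apply: contraTneq xy => xy_eq; apply/norP.
    by split; apply/negP => /loopless; rewrite /= xy_eq eqxx.
  rewrite neq_ltn => /orP [] ltxy; first by apply: s_proper; rewrite ?ltxy ?ltn_ord.
  by rewrite eq_sym; apply: s_proper; rewrite ?ltxy ?ltn_ord // edges_rel_sym.
case: n c c_proper => [|n] c c_proper //.
suff : mkseq (fun i => val (c (inord i))) n.+1 \in colorings E n.+1 by case: colorings.
apply: colorings_complete => [i | i j /andP [ij j_n] ij_edge]; first exact: ltn_ord.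
rewrite (inj_eq val_inj); apply: c_proper.
by rewrite /rel_of_edges !inordK // (ltn_trans ij j_n).
Qed.

Definition rem_edge (p : nat * nat) (E : seq (nat * nat)) : seq (nat * nat) :=
  [seq q <- E | (q != p) && (q != (p.2, p.1))].

Lemma rem_edgeC i j E : rem_edge (j, i) E = rem_edge (i, j) E.
Proof. by apply: eq_filter => q; rewrite andbC. Qed.

Lemma del_edge_sub n E (u v : 'I_n) :
  subrel (del_edge (@rel_of_edges n E) u v)
         (@rel_of_edges n (rem_edge (u : nat, v : nat) E)).
Proof.
move=> x y /andP [xy not_uv].
have not_vu : ~~ ((y == u) && (x == v) || (y == v) && (x == u)).
  by rewrite orbC !(andbC (y == _)).
rewrite /rel_of_edges /edges_rel !mem_filter /= !xpair_eqE !val_eqE -!negb_or.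
by rewrite not_uv not_vu.
Qed.

Definition edge_critical_check (n : nat) (E : seq (nat * nat)) : bool :=
  [&& all (fun p => p.1 != p.2) E, colorings E n == [::],
      all (fun p => colorings (rem_edge p E) n != [::]) E
    & all (fun i => has (edges_rel E i) (iota 0 n)) (iota 0 n)].

Lemma edge_critical_of_check n E :
  edge_critical_check n E -> edge_critical (@rel_of_edges n E).
Proof.
case/and4P => loopless no_col /allP rem_col /allP no_iso; split.
- by move/(three_colorable_edgesP n loopless); rewrite no_col.
- move=> u v uv; apply: (three_colorable_sub (subxx [set: _]) (@del_edge_sub n E u v)).
  have loopless_rem : all (fun p => p.1 != p.2) (rem_edge (u : nat, v : nat) E).
    by rewrite all_filter; apply: sub_all loopless => p p_loopless; apply/implyP.
  apply/(three_colorable_edgesP n loopless_rem).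
  by case/orP: uv => /rem_col //; rewrite rem_edgeC.
- move=> x; have := no_iso x; rewrite mem_iota ltn_ord => /(_ isT) /hasP [y].
  by rewrite mem_iota add0n => /andP [_ y_n] xy; exists (Ordinal y_n).
Qed.

Lemma edge_critical_K4 : edge_critical (@adj K4).
Proof.
pose K4' := Graph (@rel_of_edges 4 [:: (0, 1); (0, 2); (0, 3); (1, 2); (1, 3); (2, 3)]).
apply: (@edge_critical_iso K4 K4'); last by apply: edge_critical_of_check; vm_compute.
exists id; split; first by exists id.
by move=> [[|[|[|[|?]]]] ?] [[|[|[|[|?]]]] ?].
Qed.

Lemma edge_critical_W5 : edge_critical (@adj W5).
Proof. by apply: edge_critical_of_check; vm_compute. Qed.

Lemma edge_critical_J7 : edge_critical (@adj J7).
Proof. by apply: edge_critical_of_check; vm_compute. Qed.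

Lemma edge_critical_J12 : edge_critical (@adj J12).
Proof. by apply: edge_critical_of_check; vm_compute. Qed.

Lemma base_edge_critical (H : graph) : is_base H -> edge_critical (@adj H).
Proof.
case=> [|[|[|]]] /edge_critical_iso; apply.
- exact: edge_critical_K4.
- exact: edge_critical_W5.
- exact: edge_critical_J7.
- exact: edge_critical_J12.
Qed.

(* [inH'] is nested through [specially_linked_gen], so its generated induction
   principle has no hypothesis for the linking graphs: recurse by hand. *)
Fixpoint inH'_not_three_colorable (H : graph) (hH : inH' H) : not_three_colorable H :=
  match hH with
  | inH'_base _ _ H_base => let: And3 H_not3 _ _ := base_edge_critical H_base in H_not3
  | inH'_rec _ k x _ _ k35 _ x_cycle _ x_deg linked =>
      linked_odd_cycle_not_three_colorable (S := ~: [set x i | i in 'I_k])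
        (ltac:(by case: k35 => ->) : odd k) x_cycle
        (fun i => ltac:(by rewrite x_deg) : 2 < #|[set y | adj (x i) y]|)
        (fun j zj zj1 xj_zj zj_pred zj_next xj1_zj1 zj1_prev zj1_next zj_zj1 =>
           let: ex_intro G' (conj G'_inH' G'_embeds) :=
             linked j zj zj1 xj_zj zj_pred zj_next xj1_zj1 zj1_prev zj1_next zj_zj1 in
           ex_intro _ G' (conj (inH'_not_three_colorable G'_inH') G'_embeds))
  end.

Theorem lemma3p6 (H : graph) : inH' H -> four_critical (@adj H).
Proof.
move=> hH; split; first exact: inH'_not_three_colorable.
case: hH => [G _ G_base | G k x [_ G_loopless] G_nb _ _ _ _ _ _] S f.
  by case: (edge_critical_four_critical (base_edge_critical G_base)) => _; apply.
by apply: nb_critical_proper_three_colorable G_nb => v; apply: negbTE.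
Qed.
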